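(* Every Boolean self-join-free conjunctive query that has exactly two minimal query plans is linear, i.e., contains no triad.
   Context: Let $Q=\exists\vec x\,(R_1(\vec x_1)\wedge\cdots\wedge R_m(\vec x_m))$ be a Boolean self-join-free conjunctive query. $Q$ is hierarchical if for any two variables $x,y$, with $\mathrm{at}(x)$ the set of atoms containing $x$, $\mathrm{at}(x)\subseteq\mathrm{at}(y)$, $\mathrm{at}(x)\supseteq\mathrm{at}(y)$ or $\mathrm{at}(x)\cap\mathrm{at}(y)=\emptyset$. A dissociation is $\Delta=(\vec y_1,\dots,\vec y_m)$ with $\vec y_i\subseteq\mathrm{var}(Q)\setminus\vec x_i$; $Q^\Delta$ has atoms $R_i^{\vec y_i}(\vec x_i,\vec y_i)$; $\Delta$ is hierarchical if $Q^\Delta$ is. Order dissociations by $\Delta\preceq\Delta'$ iff $\vec y_i\subseteq\vec y'_i$ for all $i$. The minimal query plans of $Q$ correspond one-to-one to the minimal hierarchical dissociations. An atom is independent if no other atom has a variable set that is a strict subset of its variable set. A path between atoms $R_1,R_p$ is an alternating sequence $R_1-\vec y_1-R_2-\cdots-\vec y_{p-1}-R_p$ with consecutive atoms sharing the nonempty variable sets $\vec y_i$. A triad is a set of three independent atoms $\{R_1,R_2,R_3\}$ such that for each pair $i\ne j$ there is a path from $R_i$ to $R_j$ using no variable of the third atom. $Q$ is linear if it has no triad. *)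

From mathcomp Require Import all_boot.
Set Implicit Arguments. Unset Strict Implicit. Unset Printing Implicit Defensive.

(* A Boolean self-join-free conjunctive query with m atoms R_0..R_{m-1} over a
   finite type of variables V is given by the variable sets  x i = vars(R_i).
   (Self-join-freeness: every atom has its own relation symbol, so the query is
   determined by the family of variable sets of its atoms.) *)

Section CQ.
Variables (V : finType) (m : nat).
Implicit Types (x : 'I_m -> {set V}).

Definition qvars x : {set V} := \bigcup_(i < m) x i.

Definition atoms_of x (v : V) : {set 'I_m} := [set i | v \in x i].

Definition hierarchical x : bool :=
  [forall v, forall w,
     [|| atoms_of x v \subset atoms_of x w,
         atoms_of x w \subset atoms_of x v |
         [disjoint atoms_of x v & atoms_of x w]]].

Definition dissociation x (D : {ffun 'I_m -> {set V}}) : bool :=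
  [forall i, D i \subset qvars x :\: x i].

Definition dissociate x (D : {ffun 'I_m -> {set V}}) : 'I_m -> {set V} :=
  fun i => x i :|: D i.

Definition hier_dissociation x (D : {ffun 'I_m -> {set V}}) : bool :=
  dissociation x D && hierarchical (dissociate x D).

Definition dissoc_le (D D' : {ffun 'I_m -> {set V}}) : bool :=
  [forall i, D i \subset D' i].

Definition min_hier_dissociation x (D : {ffun 'I_m -> {set V}}) : bool :=
  hier_dissociation x D &&
  [forall D' : {ffun 'I_m -> {set V}},
     (hier_dissociation x D' && dissoc_le D' D) ==> (D' == D)].

(* number of minimal query plans = number of minimal hierarchical dissociations *)
Definition num_min_plans x : nat :=
  #|[set D : {ffun 'I_m -> {set V}} | min_hier_dissociation x D]|.

Definition independent x (i : 'I_m) : bool :=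
  [forall j, ~~ (x j \proper x i)].

Definition step_avoiding x (k : 'I_m) : rel 'I_m :=
  fun a b => [exists v, [&& v \in x a, v \in x b & v \notin x k]].

Definition path_avoiding x (k i j : 'I_m) : bool :=
  connect (step_avoiding x k) i j.

Definition triad x (i j k : 'I_m) : bool :=
  [&& i != j, j != k, i != k,
      independent x i, independent x j, independent x k,
      path_avoiding x k i j, path_avoiding x i j k & path_avoiding x j i k].

Definition linear x : bool :=
  ~~ [exists i, exists j, exists k, triad x i j k].

End CQ.

From mathcomp Require Import all_boot.

Set Implicit Arguments. Unset Strict Implicit. Unset Printing Implicit Defensive.

(* A query with a triad has at least three minimal query plans; hence a query
   with exactly two minimal plans is linear.

   1. Crossing lemma.  Let z be a hierarchical query containing x atomwise and
      agreeing with x on two atoms a, b.  Then there is no atom c <> b with a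
      path b ~> c avoiding x_a and a path a ~> c avoiding x_b.  The engine is
      [path_exit]: when an x-path avoiding x_k leaves a variable w of z, the
      step variable v at that point satisfies at_z(w) ⊆ at_z(v) and v ∉ x_k.
   2. For every atom t the dissociation giving every other atom all variables
      is hierarchical; a minimal hierarchical dissociation below it leaves t
      undissociated.
   3. For a triad i, j, k the three minimal plans obtained in 2. for i, j, k
      are pairwise distinct by 1., which gives three minimal plans. *)

Section Paths.
Variables (V : finType) (m : nat) (x : 'I_m -> {set V}).

Lemma step_avoiding_sym k : symmetric (step_avoiding x k).
Proof.
by move=> a b; apply/existsP/existsP => -[v /and3P[va vb vk]];
  exists v; rewrite va vb vk.
Qed.

Lemma path_avoiding_sym k a b : path_avoiding x k a b = path_avoiding x k b a.
Proof. exact: (sym_connect_sym (@step_avoiding_sym k)). Qed.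

End Paths.

Section Hierarchy.
Variables (V : finType) (m : nat).
Implicit Types (z : 'I_m -> {set V}).

Lemma atoms_ofE z v s : (s \in atoms_of z v) = (v \in z s).
Proof. by rewrite inE. Qed.

Lemma hierarchical_cases z v w : hierarchical z ->
  [|| atoms_of z v \subset atoms_of z w,
      atoms_of z w \subset atoms_of z v |
      [disjoint atoms_of z v & atoms_of z w]].
Proof. by move=> /forallP /(_ v) /forallP /(_ w). Qed.

Lemma ranked_hierarchical z (rank : V -> nat) :
  (forall v w, rank v <= rank w -> atoms_of z v \subset atoms_of z w) ->
  hierarchical z.
Proof.
move=> mono; apply/forallP => v; apply/forallP => w.
by case/orP: (leq_total (rank v) (rank w)) => /mono ->; rewrite ?orbT.
Qed.

End Hierarchy.

Section Crossing.
Variables (V : finType) (m : nat) (x z : 'I_m -> {set V}).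
Hypotheses (z_hier : hierarchical z) (x_sub_z : forall i, x i \subset z i).

Lemma path_exit k a b w :
  connect (step_avoiding x k) a b -> w \in z a -> w \notin z b ->
  exists v c, [/\ v \notin x k, atoms_of z w \subset atoms_of z v,
                  v \in z c & w \notin z c].
Proof.
move=> /connectP[p]; elim: p a => [|a1 p IH] a /=; first by move=> _ -> ->.
case/andP=> /existsP[u /and3P[ua ua1 uk]] pth last_b wa wb.
have [wa1 | wa1] := boolP (w \in z a1); first exact: IH pth last_b wa1 wb.
have ua' : u \in z a := subsetP (x_sub_z a) u ua.
have ua1' : u \in z a1 := subsetP (x_sub_z a1) u ua1.
exists u, a1; split => //.
case/or3P: (hierarchical_cases w u z_hier) => // [wu | wu].
  by have := subsetP wu a1; rewrite !atoms_ofE ua1' (negbTE wa1) => /(_ isT).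
have a_at_w : a \in atoms_of z w by rewrite atoms_ofE.
by have := disjointFr wu a_at_w; rewrite atoms_ofE ua'.
Qed.

Variables a b c : 'I_m.
Hypotheses (za : z a = x a) (zb : z b = x b) (bc : b != c).
Hypotheses (path_bc : path_avoiding x a b c) (path_ac : path_avoiding x b a c).

Lemma shared_in_a w : w \in z b -> w \in z c -> w \in z a.
Proof.
move=> wb wc; apply: contraT => wa.
have path_ca : path_avoiding x b c a by rewrite path_avoiding_sym.
have [v [_ [vxb wv _ _]]] := path_exit path_ca wc wa.
by have := subsetP wv b; rewrite !atoms_ofE zb (negbTE vxb) -zb wb => /(_ isT).
Qed.

(* Some variable of b is missing from c: otherwise the first step of the path
   from b to c would use a variable of b outside x_a, which is shared with c. *)
Lemma b_not_sub_c : ~~ (z b \subset z c).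
Proof.
apply/negP => sub_bc; case/connectP: path_bc => -[|a1 p] /=.
  by move=> _ eq_cb; move: bc; rewrite eq_cb eqxx.
case/andP=> /existsP[u /and3P[ub _ ua]] _ _.
have ub' : u \in z b by rewrite zb.
by have := shared_in_a ub' (subsetP sub_bc u ub'); rewrite za (negbTE ua).
Qed.

(* Crossing lemma: a variable w of b \ c with the largest atom set yields, by
   [path_exit] on the path b ~> c, a variable of b \ c with a larger one. *)
Lemma no_crossing_paths : False.
Proof.
have [w0 w0b w0c] := subsetPn b_not_sub_c.
have [w /andP[wb wc] w_max] := @arg_maxnP V w0
  (fun w => (w \in z b) && (w \notin z c)) (fun w => #|atoms_of z w|)
  (introT andP (conj w0b w0c)).
have [v [c' [va wv vc' wc']]] := path_exit path_bc wb wc.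
have vb : v \in z b by have := subsetP wv b; rewrite !atoms_ofE wb => ->.
have [vc | vc] := boolP (v \in z c).
  by have := shared_in_a vb vc; rewrite za (negbTE va).
have w_lt_v : atoms_of z w \proper atoms_of z v.
  by apply/properP; split => //; exists c'; rewrite atoms_ofE.
have := w_max v; rewrite vb vc => /(_ isT) /=.
by rewrite leqNgt (proper_card w_lt_v).
Qed.

End Crossing.

Section Plans.
Variables (V : finType) (m : nat) (x : 'I_m -> {set V}).
Local Notation dissoc := {ffun 'I_m -> {set V}}.

Lemma undissociated_crossing (D : dissoc) a b c :
  hier_dissociation x D -> D a = set0 -> D b = set0 -> b != c ->
  path_avoiding x a b c -> path_avoiding x b a c -> False.
Proof.
case/andP=> _ hier Da Db; apply: (no_crossing_paths hier).
- by move=> i; rewrite subsetUl.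
- by rewrite /dissociate Da setU0.
- by rewrite /dissociate Db setU0.
Qed.

Definition dissoc_graph (D : dissoc) : {set 'I_m * V} := [set p | p.2 \in D p.1].

Lemma dissoc_graph_proper (D D' : dissoc) :
  dissoc_le D D' -> D != D' -> dissoc_graph D \proper dissoc_graph D'.
Proof.
move=> /forallP le neq; apply/properP; split.
  by apply/subsetP => -[i v]; rewrite !inE; apply: (subsetP (le i)).
have [i] : exists i, ~~ (D' i \subset D i).
  apply/existsP; apply: contraR neq => /existsPn sub.
  by apply/eqP/ffunP => i; apply/eqP; rewrite eqEsubset le; exact/negPn/sub.
by case/subsetPn => v vD' vD; exists (i, v); rewrite !inE.
Qed.

Lemma dissoc_le_trans (D1 D2 D3 : dissoc) :
  dissoc_le D1 D2 -> dissoc_le D2 D3 -> dissoc_le D1 D3.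
Proof.
move=> /forallP le12 /forallP le23; apply/forallP => i.
exact: subset_trans (le12 i) (le23 i).
Qed.

(* Below every hierarchical dissociation lies a minimal one: take one of
   smallest graph. *)
Lemma exists_min_below (D : dissoc) : hier_dissociation x D ->
  exists2 M, min_hier_dissociation x M & dissoc_le M D.
Proof.
move=> hD; have le_refl : dissoc_le D D by apply/forallP => i.
have [M /andP[hM le_MD] M_min] := @arg_minnP _ D
  (fun M => hier_dissociation x M && dissoc_le M D)
  (fun M => #|dissoc_graph M|) (introT andP (conj hD le_refl)).
exists M => //; rewrite /min_hier_dissociation hM /=.
apply/forallP => D'; apply/implyP => /andP[hD' le_D'M]; apply: contraT => neq.
have := M_min D'; rewrite hD' (dissoc_le_trans le_D'M le_MD) => /(_ isT).
by rewrite leqNgt proper_card // dissoc_graph_proper.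
Qed.

Lemma sub_qvars s : x s \subset qvars x.
Proof. exact: (bigcup_sup s). Qed.

Definition all_but (t : 'I_m) : dissoc :=
  [ffun s => if s == t then set0 else qvars x :\: x s].

Lemma all_butE t s v :
  (v \in dissociate x (all_but t) s) = if s == t then v \in x t else v \in qvars x.
Proof.
rewrite /dissociate ffunE; case: eqP => [-> | _]; first by rewrite setU0.
rewrite in_setU in_setD; case x_sv: (v \in x s) => //=.
by rewrite (subsetP (sub_qvars s)).
Qed.

(* Its atom sets are ranked by (v ∈ x_t) + (v ∈ var(Q)), so it is hierarchical. *)
Lemma all_but_hier t : hier_dissociation x (all_but t).
Proof.
apply/andP; split.
  by apply/forallP => s; rewrite ffunE; case: eqP => _; rewrite ?sub0set.
apply: (ranked_hierarchical (rank := fun v => (v \in x t) + (v \in qvars x))).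
move=> v w le.
apply/subsetP => s; rewrite !atoms_ofE !all_butE.
move: le (subsetP (sub_qvars t) v) (subsetP (sub_qvars t) w).
by case: (s == t) (v \in x t) (w \in x t) (v \in qvars x) (w \in qvars x)
  => [] [] [] [] [].
Qed.

Lemma min_plan_fixing t :
  exists2 M, min_hier_dissociation x M & M t = set0.
Proof.
have [M minM /forallP/(_ t)] := exists_min_below (all_but_hier t).
by rewrite ffunE eqxx subset0 => /eqP; exists M.
Qed.

Lemma fixing_plans_differ (M M' : dissoc) a b c :
  min_hier_dissociation x M -> M a = set0 -> M' b = set0 -> b != c ->
  path_avoiding x a b c -> path_avoiding x b a c -> M != M'.
Proof.
case/andP=> hM _ Ma M'b bc p_bc p_ac; apply/eqP => eqM; subst M'.
exact: undissociated_crossing hM Ma M'b bc p_bc p_ac.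
Qed.

Lemma triad_three_plans i j k : triad x i j k -> 2 < num_min_plans x.
Proof.
case/and4P=> _ jk ik /and4P[_ _ _ /and3P[p_ij p_jk p_ik]].
have [Mi minMi Mi0] := min_plan_fixing i.
have [Mj minMj Mj0] := min_plan_fixing j.
have [Mk minMk Mk0] := min_plan_fixing k.
have neq_ij : Mi != Mj := fixing_plans_differ minMi Mi0 Mj0 jk p_jk p_ik.
have neq_ik : Mi != Mk.
  have p_kj : path_avoiding x i k j by rewrite path_avoiding_sym.
  by apply: fixing_plans_differ minMi Mi0 Mk0 _ p_kj p_ij; rewrite eq_sym.
have neq_jk : Mj != Mk.
  have p_ki : path_avoiding x j k i by rewrite path_avoiding_sym.
  have p_ji : path_avoiding x k j i by rewrite path_avoiding_sym.
  by apply: fixing_plans_differ minMj Mj0 Mk0 _ p_ki p_ji; rewrite eq_sym.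
rewrite /num_min_plans.
apply: leq_trans (subset_leq_card (_ : [set Mi; Mj; Mk] \subset _)).
  by rewrite -setUA cardsU1 cards2 !inE negb_or neq_ij neq_ik neq_jk.
by apply/subsetP => M; rewrite !inE => /orP[/orP[]|] /eqP ->.
Qed.

End Plans.

Theorem mainTheorem10 (V : finType) (m : nat) (x : 'I_m -> {set V}) :
  num_min_plans x = 2 -> linear x.
Proof.
move=> two_plans; apply/existsP => -[i /existsP[j /existsP[k /triad_three_plans]]].
by rewrite two_plans.
Qed.
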